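(* Let $X$ take values in a finite set $\mathcal X$ with $\mathbb{P}(X=x)>0$ for all $x$, let $Y\in[M]$, $R\in\{0,1\}$, and let $F$ take values in a finite set $\mathcal F$. Assume $F$ is conditionally independent of $R$ given $(Y,X)$, and $\mathbb{P}(R=1\mid Y=y,X=x)>0$ for all $x,y$. For each $x$ define $\alpha_x(f,y)=\mathbb{P}(R=1,F=f,Y=y\mid X=x)$, $\beta_x(f)=\mathbb{P}(R=0,F=f\mid X=x)$, $A_x=[\alpha_x(f,y)]_{f\in\mathcal F,y\in[M]}$, $\boldsymbol\beta_x=(\beta_x(f))_{f\in\mathcal F}$, $D=\mathrm{diag}(1,2,\dots,M)$, and \[\Pi_x=\Big\{(\pi_x(y))_{y\in[M]}:\ \sum_{y=1}^M\alpha_x(f,y)\Big(\frac1{\pi_x(y)}-1\Big)=\beta_x(f)\ \forall f\in\mathcal F,\ \pi_x(y)\in(0,1]\Big\}.\] Let $\theta_{x,\min}$ and $\theta_{x,\max}$ be the minimum and maximum of $\mathbf 1^\top A_xD(\mathbf w_x+\mathbf 1)$ over $\mathbf w_x\in\mathbb{R}^M$ with $A_x\mathbf w_x=\boldsymbol\beta_x$, $\mathbf w_x\ge\mathbf 0$. Then the set \[\Theta=\Big\{\sum_{x\in\mathcal X}\mathbb{P}(X=x)\sum_{f\in\mathcal F}\sum_{y=1}^M y\,\frac{\alpha_x(f,y)}{\pi_x(y)}:\ (\pi_x)\in\Pi_x\ \forall x\Big\}\] equals $\big[\sum_x\theta_{x,\min}\mathbb{P}(X=x),\ \sum_x\theta_{x,\max}\mathbb{P}(X=x)\big]=:[\theta^{\mathrm{shad}}_{\min},\theta^{\mathrm{shad}}_{\max}]$.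 Moreover, if $A_x$ has full column rank for every $x\in\mathcal X$, then $\theta^{\mathrm{shad}}_{\min}=\theta^{\mathrm{shad}}_{\max}$ (point identification).
   Context: $\Theta$ is the identification set for $\theta=\mathbb{E}[Y]$ when $(X,F,R,RY)$ is observed and missingness may depend on $Y$; $\pi_x(y)$ plays the role of $\mathbb{P}(R=1\mid Y=y,X=x)$. Column vectors $\mathbf 1,\mathbf 0$ are all-ones and all-zeros vectors of appropriate dimension. *)

From HB Require Import structures.
From mathcomp Require Import all_boot all_order all_algebra.
From mathcomp Require Import boolp classical_sets reals.
Set Implicit Arguments. Unset Strict Implicit. Unset Printing Implicit Defensive.
Import Order.TTheory GRing.Theory Num.Theory.
Local Open Scope ring_scope.
Local Open Scope classical_set_scope.

(* A joint law of (X, F, R, Y) on the finite space X * F * bool * 'I_M.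
   The outcome value y in [M] = {1,..,M} is represented by j : 'I_M with
   y = j + 1 (see yval). R = 1 is encoded by true. *)
Section Shadow.
Variables (R : realType) (X F : finType) (M : nat).
Variable P : X -> F -> bool -> 'I_M -> R.

Definition yval (j : 'I_M) : R := (j.+1)%:R.

Definition is_prob : Prop :=
  (forall x f r j, 0 <= P x f r j) /\
  \sum_x \sum_f \sum_r \sum_j P x f r j = 1.

Definition PX (x : X) : R := \sum_f \sum_r \sum_j P x f r j.
Definition PXY (x : X) (j : 'I_M) : R := \sum_f \sum_r P x f r j.
Definition PXFY (x : X) (f : F) (j : 'I_M) : R := \sum_r P x f r j.
Definition PXRY (x : X) (r : bool) (j : 'I_M) : R := \sum_f P x f r j.

Definition cond_indep_F_R : Prop :=
  forall x f r j, P x f r j * PXY x j = PXFY x f j * PXRY x r j.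

Definition prop_score (x : X) (j : 'I_M) : R := PXRY x true j / PXY x j.

Definition alpha (x : X) (f : F) (j : 'I_M) : R := P x f true j / PX x.
Definition beta (x : X) (f : F) : R := (\sum_j P x f false j) / PX x.

Definition Amx (x : X) : 'M[R]_(#|F|, M) :=
  \matrix_(i < #|F|, j < M) alpha x (enum_val i) j.
Definition betav (x : X) : 'cV[R]_#|F| := \col_(i < #|F|) beta x (enum_val i).
Definition Dmx : 'M[R]_M := diag_mx (\row_(j < M) yval j).

Definition Pi (x : X) : set ('I_M -> R) :=
  [set pi | (forall f, \sum_j alpha x f j * (1 / pi j - 1) = beta x f) /\
            (forall j, 0 < pi j <= 1)].

Definition lp_obj (x : X) (w : 'cV[R]_M) : R :=
  ((const_mx 1 : 'rV[R]_#|F|) *m Amx x *m Dmx *m (w + const_mx 1)) ord0 ord0.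

Definition lp_values (x : X) : set R :=
  [set v | exists w : 'cV[R]_M,
     Amx x *m w = betav x /\ (forall j, 0 <= w j ord0) /\ v = lp_obj x w].

Definition theta_min (x : X) : R := inf (lp_values x).
Definition theta_max (x : X) : R := sup (lp_values x).

Definition theta_shad_min : R := \sum_x theta_min x * PX x.
Definition theta_shad_max : R := \sum_x theta_max x * PX x.

Definition Theta : set R :=
  [set t | exists pi : X -> 'I_M -> R, (forall x, Pi x (pi x)) /\
     t = \sum_x PX x * \sum_f \sum_j yval j * (alpha x f j / pi x j)].

End Shadow.

(* For each covariate value x, the substitution w(y) = 1/pi_x(y) - 1 maps Pi_x
   onto the polytope {w >= 0 | A_x w = beta_x} and turns the x-term of Theta
   into the linear objective 1^T A_x D (w + 1).  The polytope is nonempty (it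
   contains the true odds P(R=0|Y,X)/P(R=1|Y,X), because F is independent of R
   given (Y,X)), bounded (A_x >= 0 has positive column sums) and closed, so the
   objective attains its extrema on it, and by convexity its range is exactly
   [theta_x_min, theta_x_max].  Theta is the P(X=x)-weighted sum of these
   intervals, hence the interval of the weighted endpoints.  If A_x has full
   column rank the polytope is a single point, so the endpoints coincide. *)

From mathcomp Require Import all_boot all_order all_algebra.
From mathcomp Require Import all_classical all_reals all_analysis.
From mathcomp Require Import ring lra.
Set Implicit Arguments.
Unset Printing Implicit Defensive.

Import Order.TTheory GRing.Theory Num.Theory.
Import numFieldNormedType.Exports.
Local Open Scope ring_scope.
Local Open Scope classical_set_scope.

Section ExtremaOnRowVectors.
Variables (R : realType) (n : nat).

Lemma continuous_rV_comb (c : 'I_n -> R) :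
  continuous (fun v : 'rV[R]_n => \sum_j c j * v ord0 j).
Proof.
suff comb_seq (r : seq 'I_n) :
    continuous (fun v : 'rV[R]_n => \sum_(j <- r) c j * v ord0 j).
  exact: comb_seq.
elim: r => [|j r IHr].
  under eq_fun do rewrite big_nil; exact: cst_continuous.
under eq_fun do rewrite big_cons.
move=> v; apply: (@continuousD R R^o _ _ _ v); last exact: IHr.
exact: (continuousM (@cst_continuous _ _ _ v) (@coord_continuous _ _ _ _ _ v)).
Qed.

Lemma closed_box_extrema (S : set 'rV[R]_n) (g : 'rV[R]_n -> R) (a b : R) :
  S !=set0 -> closed S -> (forall v, S v -> forall j, a <= v ord0 j <= b) ->
  continuous g ->
  exists u1 u2, [/\ S u1, S u2 & forall v, S v -> g u1 <= g v <= g u2].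
Proof.
move=> S0 clS Sbox cg.
have cpS : compact S.
  apply: (subclosed_compact clS (@rV_compact _ _ (fun=> `[a, b]%classic) _)).
    by move=> _; exact: segment_compact.
  by move=> v Sv j /=; rewrite in_itv /= Sbox.
have gS : {within S, continuous g} by exact: continuous_subspaceT.
have [u1 /set_mem Su1 gu1] := compact_EVT_min S0 cpS gS.
have [u2 /set_mem Su2 gu2] := compact_EVT_max S0 cpS gS.
by exists u1, u2; split=> // v Sv; rewrite gu1 ?gu2 //; exact/mem_set.
Qed.

End ExtremaOnRowVectors.

Lemma inf_sup_attained (R : realType) (S : set R) (a b : R) :
  S a -> S b -> (forall v, S v -> a <= v <= b) -> inf S = a /\ sup S = b.
Proof.
move=> Sa Sb Sab; have S0 : S !=set0 by exists a.
have lbS : lbound S a by move=> v /Sab /andP[].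
have ubS : ubound S b by move=> v /Sab /andP[].
split; apply/eqP; rewrite eq_le.
  by rewrite (ge_inf (ex_intro _ a lbS) Sa) lb_le_inf.
by rewrite ge_sup // sup_upper_bound //; split=> //; exists b.
Qed.

Lemma between_convex_comb (R : realFieldType) (a b t : R) :
  a <= t <= b -> exists2 l, 0 <= l <= 1 & t = (1 - l) * a + l * b.
Proof.
case/andP=> le_at le_tb; have [ab | ba] := ltP a b.
  have ba_neq0 : b - a != 0 by rewrite subr_eq0 gt_eqF.
  exists ((t - a) / (b - a)); last by field.
  have ba_gt0 : 0 < b - a by rewrite subr_gt0.
  apply/andP; split; first by rewrite divr_ge0 ?subr_ge0 // ltW.
  by rewrite ler_pdivrMr // mul1r lerD2r.
exists 0; first by rewrite lexx ler01.
by apply/eqP; rewrite subr0 mul1r mul0r addr0 eq_le le_at (le_trans le_tb ba).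
Qed.

Lemma sum_itv_image (R : realFieldType) (I : finType) (c a b : I -> R) :
  (forall i, 0 <= c i) -> (forall i, a i <= b i) ->
  [set s | exists2 t, (forall i, a i <= t i <= b i) & s = \sum_i t i * c i] =
  [set s | \sum_i a i * c i <= s <= \sum_i b i * c i].
Proof.
move=> c0 ab; apply/seteqP; split=> s.
  case=> t abt -> /=; apply/andP; split; apply: ler_sum => i _;
    by apply: ler_wpM2r; case/andP: (abt i).
move=> /between_convex_comb[l /andP[l0 l1] ->].
have l'_ge0 : 0 <= 1 - l by rewrite subr_ge0.
exists (fun i => (1 - l) * a i + l * b i).
  move=> i; have abi := ab i; apply/andP; split; nra.
rewrite !mulr_sumr -big_split; apply: eq_bigr => i _ /=; ring.
Qed.

Lemma le_div_colsum (R : realFieldType) (I J : finType) (A : I -> J -> R)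
    (w : J -> R) (j : J) :
  (forall i k, 0 <= A i k) -> (forall k, 0 <= w k) -> 0 < \sum_i A i j ->
  w j <= (\sum_i \sum_k A i k * w k) / \sum_i A i j.
Proof.
move=> A0 w0 Aj0; rewrite ler_pdivlMr // exchange_big /= mulrC.
rewrite (bigD1 j) //= mulr_suml lerDl.
by apply: sumr_ge0 => k _; apply: sumr_ge0 => i _; rewrite mulr_ge0.
Qed.

Lemma mulmx_inj_full_col_rank (K : fieldType) m n p (A : 'M[K]_(m, n)) :
  \rank A = n -> injective (@mulmx K m n p A).
Proof.
move=> rkA B C eqABC; apply: trmx_inj.
have freeAt : row_free A^T by rewrite /row_free mxrank_tr rkA.
by apply: (row_free_inj freeAt); rewrite -!trmx_mul eqABC.
Qed.

Section Identification.
Variables (R : realType) (X F : finType) (M : nat).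
Variable P : X -> F -> bool -> 'I_M -> R.
Hypotheses (P_prob : is_prob P) (PX_gt0 : forall x, 0 < PX P x).
Hypotheses (F_indep_R : cond_indep_F_R P).
Hypothesis score_gt0 : forall x j, 0 < prop_score P x j.

Lemma P_ge0 x f r j : 0 <= P x f r j.
Proof. by case: P_prob. Qed.

Lemma PXY_gt0 x j : 0 < PXY P x j.
Proof.
have PXY_neq0 : PXY P x j != 0.
  apply/eqP=> PXY0; have := score_gt0 x j.
  by rewrite /prop_score PXY0 invr0 mulr0 ltxx.
by rewrite lt_def PXY_neq0 sumr_ge0 // => f _; rewrite sumr_ge0 // => r _; exact: P_ge0.
Qed.

Lemma PXRY_true_gt0 x j : 0 < PXRY P x true j.
Proof.
have := score_gt0 x j; rewrite /prop_score.
by rewrite pmulr_lgt0 // invr_gt0 PXY_gt0.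
Qed.

Lemma alpha_ge0 x f j : 0 <= alpha P x f j.
Proof. by rewrite divr_ge0 ?P_ge0 // ltW. Qed.

Lemma sum_alpha_gt0 x j : 0 < \sum_f alpha P x f j.
Proof. by rewrite -mulr_suml divr_gt0 ?PXRY_true_gt0. Qed.

Lemma P_true_odds x f j :
  P x f true j * (PXRY P x false j / PXRY P x true j) = P x f false j.
Proof.
have PXY_neq0 := lt0r_neq0 (PXY_gt0 x j).
apply: (mulIf PXY_neq0); rewrite F_indep_R mulrAC F_indep_R.
by field; rewrite lt0r_neq0 // PXRY_true_gt0.
Qed.

Section FixedCovariate.
Variable x : X.

Definition lp_feasible (w : 'cV[R]_M) : Prop :=
  Amx P x *m w = betav P x /\ forall j, 0 <= w j ord0.

Lemma lp_feasibleE w : lp_feasible w <->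
  (forall f, \sum_j alpha P x f j * w j ord0 = beta P x f) /\
  (forall j, 0 <= w j ord0).
Proof.
have Aw_entry i :
    (Amx P x *m w) i ord0 = \sum_j alpha P x (enum_val i) j * w j ord0.
  by rewrite mxE; apply: eq_bigr => j _; rewrite mxE.
split=> -[eq_Aw w_ge0]; split=> //.
  by move=> f; have := congr1 (fun v : 'cV[R]_#|F| => v (enum_rank f) ord0) eq_Aw;
    rewrite /= Aw_entry !mxE enum_rankK.
by apply/matrixP => i k; rewrite [k]ord1 Aw_entry eq_Aw mxE.
Qed.

Lemma lp_values_feasible : lp_values P x = lp_obj P x @` lp_feasible.
Proof.
apply/seteqP; split=> v.
  by case=> w [eq_Aw [w_ge0 ->]]; exists w.
by case=> w [eq_Aw w_ge0] <-; exists w.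
Qed.

Definition lp_cost j : R := yval R j * \sum_f alpha P x f j.

Lemma lp_objE w : lp_obj P x w = \sum_j lp_cost j * (w j ord0 + 1).
Proof.
rewrite /lp_obj /Dmx mul_mx_diag mxE; apply: eq_bigr => j _.
rewrite !mxE /lp_cost [_ * yval R j]mulrC; congr (_ * _ * _).
transitivity (\sum_(i < #|F|) alpha P x (enum_val i) j).
  by apply: eq_bigr => i _; rewrite !mxE mul1r.
by rewrite (big_enum_val (A := F) (fun f => alpha P x f j)).
Qed.

Definition ipw_mean (pi : 'I_M -> R) : R :=
  \sum_f \sum_j yval R j * (alpha P x f j / pi j).

Lemma ipw_mean_lp_obj pi (w : 'cV[R]_M) :
  (forall j, w j ord0 + 1 = (pi j)^-1) -> ipw_mean pi = lp_obj P x w.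
Proof.
move=> w_pi; rewrite lp_objE /ipw_mean exchange_big; apply: eq_bigr => j _.
by rewrite /lp_cost w_pi -mulrA mulr_suml mulr_sumr.
Qed.

Lemma ipw_mean_Pi : ipw_mean @` Pi P x = lp_values P x.
Proof.
rewrite lp_values_feasible; apply/seteqP; split=> v.
  case=> pi [Pi_eq Pi_bnd] <-.
  exists (\col_j ((pi j)^-1 - 1)).
    apply/lp_feasibleE; split=> [f | j].
      by rewrite -Pi_eq; apply: eq_bigr => j _; rewrite mxE div1r.
    by have /andP[pi_gt0 pi_le1] := Pi_bnd j; rewrite mxE subr_ge0 invf_ge1.
  by apply/esym/ipw_mean_lp_obj => j; rewrite mxE subrK.
case=> w /lp_feasibleE[w_eq w_ge0] <-.
have w1_gt0 j : 0 < w j ord0 + 1 by rewrite (le_lt_trans (w_ge0 j)) // ltrDl.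
exists (fun j => (w j ord0 + 1)^-1).
  split=> [f | j].
    by rewrite -w_eq; apply: eq_bigr => j _; rewrite div1r invrK addrK.
  by rewrite invr_gt0 w1_gt0 (invf_le1 (w1_gt0 j)) lerDr w_ge0.
by apply: ipw_mean_lp_obj => j; rewrite invrK.
Qed.

Definition true_odds : 'cV[R]_M := \col_j (PXRY P x false j / PXRY P x true j).

Lemma lp_feasible_true_odds : lp_feasible true_odds.
Proof.
apply/lp_feasibleE; split=> [f | j]; last first.
  by rewrite mxE divr_ge0 // sumr_ge0 // => f _; exact: P_ge0.
rewrite /beta mulr_suml; apply: eq_bigr => j _.
by rewrite mxE /alpha mulrAC P_true_odds.
Qed.

Lemma lp_feasible_bounded :
  exists B, forall w, lp_feasible w -> forall j, 0 <= w j ord0 <= B.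
Proof.
pose B j := (\sum_f beta P x f) / \sum_f alpha P x f j.
have B_ge0 j : 0 <= B j.
  apply: divr_ge0; last exact: ltW (sum_alpha_gt0 x j).
  apply: sumr_ge0 => f _; apply: divr_ge0; last exact: ltW (PX_gt0 x).
  by apply: sumr_ge0 => k _; exact: P_ge0.
exists (\sum_j B j) => w /lp_feasibleE[w_eq w_ge0] j; rewrite w_ge0 /=.
apply: (le_trans (y := B j)); last by rewrite (bigD1 j) //= lerDl sumr_ge0.
rewrite /B -(eq_bigr _ (fun f _ => w_eq f)).
exact: le_div_colsum (alpha_ge0 x) w_ge0 (sum_alpha_gt0 x j).
Qed.

Lemma closed_lp_feasible : closed [set v : 'rV[R]_M | lp_feasible v^T].
Proof.
have -> : [set v : 'rV[R]_M | lp_feasible v^T] =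
    \bigcap_(i in [set: 'I_#|F|])
      [set v | \sum_j Amx P x i j * v ord0 j = betav P x i ord0] `&`
    \bigcap_(j in [set: 'I_M]) [set v | 0 <= v ord0 j].
  apply/seteqP; split=> v /=.
    case=> /matrixP eq_Av v_ge0; split=> [i _ | j _] /=; last first.
      by have := v_ge0 j; rewrite mxE.
    by rewrite -eq_Av [RHS]mxE; apply: eq_bigr => j _; rewrite [v^T _ _]mxE.
  case=> eq_Av v_ge0; split=> [|j]; last by rewrite mxE; exact: v_ge0.
  apply/matrixP => i k; rewrite [k]ord1 [LHS]mxE -(eq_Av i I).
  by apply: eq_bigr => j _; rewrite [v^T _ _]mxE.
apply: closedI; apply: closed_bigI => i _.
  have := @preimage_closed _ _ (fun v : 'rV[R]_M => \sum_j Amx P x i j * v ord0 j)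
    [set y | y = betav P x i ord0].
  by apply=> [v _|]; [exact: continuous_rV_comb | exact: closed_eq].
have := @preimage_closed _ _ (fun v : 'rV[R]_M => v ord0 i) [set y | 0 <= y].
by apply=> [v _|]; [exact: coord_continuous | exact: closed_ge].
Qed.

Lemma lp_extrema : exists w1 w2, [/\ lp_feasible w1, lp_feasible w2 &
  forall w, lp_feasible w -> lp_obj P x w1 <= lp_obj P x w <= lp_obj P x w2].
Proof.
have [B w_bnd] := lp_feasible_bounded.
have feas0 : [set v : 'rV[R]_M | lp_feasible v^T] !=set0.
  by exists true_odds^T; rewrite /= trmxK; exact: lp_feasible_true_odds.
have box v : lp_feasible v^T -> forall j, 0 <= v ord0 j <= B.
  by move=> feas_v j; have := w_bnd _ feas_v j; rewrite mxE.
have [u1 [u2 [feas_u1 feas_u2 u12]]] := closed_box_extrema 0 B feas0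
  closed_lp_feasible box (continuous_rV_comb lp_cost).
have objT w : lp_obj P x w = \sum_j lp_cost j * w^T ord0 j + \sum_j lp_cost j.
  by rewrite lp_objE -big_split; apply: eq_bigr => j _; rewrite mxE mulrDr mulr1.
exists u1^T, u2^T; split=> // w feas_w.
by rewrite !objT !trmxK !lerD2r; apply: u12; rewrite /= trmxK.
Qed.

Lemma lp_feasible_convex w1 w2 l : 0 <= l <= 1 ->
  lp_feasible w1 -> lp_feasible w2 -> lp_feasible ((1 - l) *: w1 + l *: w2).
Proof.
case/andP=> l_ge0 l_le1 [eq_Aw1 w1_ge0] [eq_Aw2 w2_ge0]; split.
  by rewrite mulmxDr -!scalemxAr eq_Aw1 eq_Aw2 -scalerDl subrK scale1r.
by move=> j; rewrite !mxE addr_ge0 ?mulr_ge0 ?subr_ge0.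
Qed.

Lemma lp_obj_convex_comb w1 w2 l : lp_obj P x ((1 - l) *: w1 + l *: w2) =
  (1 - l) * lp_obj P x w1 + l * lp_obj P x w2.
Proof.
rewrite !lp_objE !mulr_sumr -big_split; apply: eq_bigr => j _ /=.
rewrite !mxE; ring.
Qed.

Lemma lp_values_itv :
  lp_values P x = [set v | theta_min P x <= v <= theta_max P x].
Proof.
have [w1 [w2 [feas_w1 feas_w2 w12]]] := lp_extrema.
have obj_bnd v : (lp_obj P x @` lp_feasible) v ->
    lp_obj P x w1 <= v <= lp_obj P x w2 by case=> w feas_w <-; exact: w12.
rewrite /theta_min /theta_max lp_values_feasible.
have [-> ->] : inf (lp_obj P x @` lp_feasible) = lp_obj P x w1 /\
                sup (lp_obj P x @` lp_feasible) = lp_obj P x w2.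
  by apply: inf_sup_attained obj_bnd; [exists w1 | exists w2].
apply/seteqP; split=> [v /obj_bnd // | v].
case/between_convex_comb=> l l01 ->.
exists ((1 - l) *: w1 + l *: w2); last exact: lp_obj_convex_comb.
exact: lp_feasible_convex.
Qed.

Lemma theta_min_le_max : theta_min P x <= theta_max P x.
Proof.
have : lp_values P x (lp_obj P x true_odds).
  by rewrite lp_values_feasible; exists true_odds; first exact: lp_feasible_true_odds.
by rewrite lp_values_itv => /andP[le_min le_max]; exact: le_trans le_max.
Qed.

Lemma theta_min_eq_max : \rank (Amx P x) = M -> theta_min P x = theta_max P x.
Proof.
move=> rkA.
have [w1 [eq_Aw1 [_ ->]]] : lp_values P x (theta_min P x).
  by rewrite lp_values_itv /= lexx theta_min_le_max.
have [w2 [eq_Aw2 [_ ->]]] : lp_values P x (theta_max P x).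
  by rewrite lp_values_itv /= lexx theta_min_le_max.
by congr lp_obj; apply: (mulmx_inj_full_col_rank rkA); rewrite eq_Aw1 eq_Aw2.
Qed.

End FixedCovariate.

Lemma ThetaE : Theta P =
  [set s | exists2 t, (forall x, theta_min P x <= t x <= theta_max P x) &
                      s = \sum_x t x * PX P x].
Proof.
apply/seteqP; split=> s.
  case=> pi [Pi_pi ->]; exists (fun x => ipw_mean x (pi x)).
    move=> x; have : lp_values P x (ipw_mean x (pi x)).
      by rewrite -ipw_mean_Pi; exists (pi x).
    by rewrite lp_values_itv.
  by apply: eq_bigr => x _; rewrite mulrC.
case=> t t_itv ->.
have /boolp.choice[pi Pi_pi] x : exists pi, Pi P x pi /\ ipw_mean x pi = t x.
  have : lp_values P x (t x) by rewrite lp_values_itv; exact: t_itv.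
  by rewrite -ipw_mean_Pi => -[pi Pi_pi <-]; exists pi.
exists pi; split=> [x | ]; first by case: (Pi_pi x).
by apply: eq_bigr => x _; rewrite mulrC; case: (Pi_pi x) => _ <-.
Qed.

End Identification.

Theorem proposition4 (R : realType) (X F : finType) (M : nat)
    (P : X -> F -> bool -> 'I_M -> R) :
  is_prob P ->
  (forall x, 0 < PX P x) ->
  cond_indep_F_R P ->
  (forall x j, 0 < prop_score P x j) ->
  Theta P = [set t | theta_shad_min P <= t <= theta_shad_max P] /\
  ((forall x, \rank (Amx P x) = M) -> theta_shad_min P = theta_shad_max P).
Proof.
move=> P_prob PX_gt0 F_indep_R score_gt0; split=> [|full_rank].
  rewrite (ThetaE P_prob PX_gt0 F_indep_R score_gt0) sum_itv_image // => x.
    exact/ltW/PX_gt0.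
  exact: theta_min_le_max.
apply: eq_bigr => x _.
by rewrite (theta_min_eq_max P_prob PX_gt0 F_indep_R score_gt0 (full_rank x)).
Qed.
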